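(* Let $W^{(1)}$ be a pro-$p$ Coxeter group (notation as in the context) and let $M$ be a group (not necessarily commutative) endowed with an action of $W^{(1)}$ by group automorphisms, written $(g,m)\mapsto g(m)$. For a group $G$ acting on $M$ let $Z^1(G,M)$ be the set of maps $\phi:G\to M$ with $\phi(gg')=\phi(g)\,g(\phi(g'))$ for all $g,g'\in G$. Then the restriction map \[ Z^1(W^{(1)},M)\longrightarrow \mathrm{Hom}_{\mathrm{Set}}(S,M)\times Z^1(\Omega^{(1)},M),\qquad \phi\mapsto \big((s\mapsto \phi(n_s)),\ (u\mapsto\phi(u))\big) \] is injective, and its image consists exactly of the pairs $(\sigma,\rho)$ satisfying: (i) $\sigma(s)\, n_s(\sigma(s))=\rho(n_s^2)$ for all $s\in S$ (note $n_s^2\in T\subseteq\Omega^{(1)}$); (ii) for all $u\in\Omega^{(1)}$ and $s\in S$, \[ \rho(u)\cdot u(\sigma(s))=\sigma(u(s))\cdot n_{u(s)}\big(\rho(u\,t_{s,u})\big), \] where $u(s):=\pi(u)s\pi(u)^{-1}\in S$ and $t_{s,u}\in T$ is the element defined by $u n_s=n_{u(s)}\,u\,t_{s,u}$; (iii) for all $s,t\in S$ with $m(s,t)<\infty$, the following two products, each with $m(s,t)$ factors, are equal: \[ \sigma(s)\cdot n_s(\sigma(t))\cdot (n_sn_t)(\sigma(s))\cdot(n_sn_tn_s)(\sigma(t))\cdots = \sigma(t)\cdot n_t(\sigma(s))\cdot(n_tn_s)(\sigma(t))\cdot(n_tn_sn_t)(\sigma(s))\cdots . \]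
   Context: A Coxeter group $(W_{\mathrm{aff}},S)$ has length function $\ell$ with respect to $S$, and $m(s,t)\in\{1,2,\dots,\infty\}$ denotes the order of $st$. An extended Coxeter group is a group $W=W_{\mathrm{aff}}\rtimes\Omega$ where $W_{\mathrm{aff}}$ is a normal subgroup, $(W_{\mathrm{aff}},S)$ is a Coxeter group, and $\Omega\le W$ is a subgroup whose conjugation action on $W_{\mathrm{aff}}$ preserves $S$; the length is extended to $W$ by $\ell(wu)=\ell(w)$ for $w\in W_{\mathrm{aff}},u\in\Omega$. A pro-$p$ Coxeter group $W^{(1)}$ consists of an extended Coxeter group $W$, an abelian group $T$, a group extension $1\to T\to W^{(1)}\xrightarrow{\pi}W\to1$ (with $T\subseteq W^{(1)}$), and elements $n_s\in\pi^{-1}(s)$ for $s\in S$ satisfying the braid relations $n_sn_tn_s\cdots=n_tn_sn_t\cdots$ ($m(s,t)$ factors on each side) whenever $m(s,t)<\infty$. We write $\Omega^{(1)}:=\pi^{-1}(\Omega)$. *)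

From Stdlib Require Import List.
Import ListNotations.

Set Implicit Arguments.

Record group := Group {
  carrier :> Type;
  gmul : carrier -> carrier -> carrier;
  gone : carrier;
  ginv : carrier -> carrier;
  gmulA : forall x y z, gmul x (gmul y z) = gmul (gmul x y) z;
  gmul1l : forall x, gmul gone x = x;
  gmulVl : forall x, gmul (ginv x) x = gone }.

Arguments gmul {g} _ _.
Arguments gone {g}.
Arguments ginv {g} _.

Fixpoint gpow {G : group} (x : G) (k : nat) : G :=
  match k with 0 => gone | S k' => gmul x (gpow x k') end.

Fixpoint gprod {G : group} (l : list G) : G :=
  match l with [] => gone | x :: l' => gmul x (gprod l') end.

Definition has_order {G : group} (x : G) (k : nat) : Prop :=
  0 < k /\ gpow x k = gone /\ (forall j, 0 < j < k -> gpow x j <> gone).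

Fixpoint alt {G : group} (a b : G) (k : nat) : G :=
  match k with 0 => gone | S k' => gmul a (alt b a k') end.

Definition is_subgroup {G : group} (P : G -> Prop) : Prop :=
  P gone /\ (forall x y, P x -> P y -> P (gmul x y)) /\ (forall x, P x -> P (ginv x)).

Definition is_normal {G : group} (P : G -> Prop) : Prop :=
  forall g x, P x -> P (gmul (gmul g x) (ginv g)).

(** (Waff, S) is a Coxeter system, Waff a subgroup of W: S consists of
    involutions generating Waff, and Waff has the universal property of
    the Coxeter presentation < S | (st)^{m(s,t)} = 1 for m(s,t) < oo >. *)
Definition coxeter_system {W : group} (Waff S : W -> Prop) : Prop :=
  is_subgroup Waff /\
  (forall s, S s -> Waff s) /\
  (forall s, S s -> s <> gone /\ gmul s s = gone) /\
  (forall w, Waff w -> exists l : list W, Forall S l /\ w = gprod l) /\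
  (forall (H : group) (f : W -> H),
     (forall s t k, S s -> S t -> has_order (gmul s t) k ->
        gpow (gmul (f s) (f t)) k = gone) ->
     exists g : W -> H,
       (forall x y, Waff x -> Waff y -> g (gmul x y) = gmul (g x) (g y)) /\
       (forall s, S s -> g s = f s)).

(** Extended Coxeter group W = Waff ⋊ Omega, Omega preserving S by conjugation. *)
Definition extended_coxeter {W : group} (Waff Omega S : W -> Prop) : Prop :=
  coxeter_system Waff S /\
  is_normal Waff /\
  is_subgroup Omega /\
  (forall w, Waff w -> Omega w -> w = gone) /\
  (forall w, exists a u, Waff a /\ Omega u /\ w = gmul a u) /\
  (forall u s, Omega u -> S s -> S (gmul (gmul u s) (ginv u))).

Definition is_hom {G H : group} (f : G -> H) : Prop :=
  forall x y, f (gmul x y) = gmul (f x) (f y).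

Definition pro_p_coxeter {W1 W : group} (Waff Omega S : W -> Prop)
    (pi : W1 -> W) (n : W -> W1) : Prop :=
  extended_coxeter Waff Omega S /\
  is_hom pi /\
  (forall w, exists x, pi x = w) /\
  (forall x y, pi x = gone -> pi y = gone -> gmul x y = gmul y x) /\
  (forall s, S s -> pi (n s) = s) /\
  (forall s t k, S s -> S t -> has_order (gmul s t) k ->
     alt (n s) (n t) k = alt (n t) (n s) k).

Definition Tker {W1 W : group} (pi : W1 -> W) (x : W1) : Prop := pi x = gone.
Definition Omega1 {W1 W : group} (pi : W1 -> W) (Omega : W -> Prop) (x : W1) : Prop :=
  Omega (pi x).

Definition is_aut_action {G M : group} (act : G -> M -> M) : Prop :=
  (forall m, act gone m = m) /\
  (forall g h m, act (gmul g h) m = act g (act h m)) /\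
  (forall g m m', act g (gmul m m') = gmul (act g m) (act g m')).

(** phi is a 1-cocycle on the subgroup P of G (values outside P irrelevant) *)
Definition is_cocycle {G M : group} (act : G -> M -> M) (P : G -> Prop)
    (phi : G -> M) : Prop :=
  forall g g', P g -> P g' -> phi (gmul g g') = gmul (phi g) (act g (phi g')).

(** The product with k factors
    x · a(y) · (ab)(x) · (aba)(y) ...   i.e.  prod_{j<k} (alt a b j)(x or y) *)
Fixpoint cocyc_braid {G M : group} (act : G -> M -> M) (a b : G) (x y : M)
    (k : nat) : M :=
  match k with
  | 0 => gone
  | S k' => gmul (cocyc_braid act a b x y k')
                 (act (alt a b k') (if Nat.odd k' then y else x))
  end.

(* A cocycle phi amounts to the homomorphism x |-> (phi x, x) into M x| W^(1), so
   it is determined by its values on the n_s and on Omega^(1), and (i)-(iii) are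
   relations that these values inherit from W^(1).  Conversely, given (sigma, rho)
   put e_s := (sigma s, n_s) and e_u := (rho u, u) in M x| W^(1).  By (iii) the e_s
   satisfy the braid relations, and by (i) e_s^2 lies in Gamma := {e_t | t in T};
   hence modulo Gamma (in its normaliser) they satisfy the Coxeter relations, and
   the universal property of (W_aff, S) shows that words in the e_s and Gamma with
   the same image in W_aff agree modulo Gamma.  Since (ii) lets e_u move past e_s,
   the products (word in e_s and Gamma) * e_u then form a subgroup projecting
   bijectively onto W^(1): the graph of the required cocycle. *)

From Pilot Require Import Defs.
From Stdlib Require Import List PeanoNat ClassicalEpsilon ProofIrrelevance
  FunctionalExtensionality PropExtensionality.

Section GroupFacts.
Context {G : group}.
Implicit Types x y z a b : G.

Lemma mulgA x y z : gmul x (gmul y z) = gmul (gmul x y) z.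
Proof. exact (gmulA _ x y z). Qed.

Lemma mul1g x : gmul gone x = x.
Proof. exact (gmul1l _ x). Qed.

Lemma mulVg x : gmul (ginv x) x = gone.
Proof. exact (gmulVl _ x). Qed.

Lemma mulgV x : gmul x (ginv x) = gone.
Proof.
  rewrite <- (mul1g (gmul x (ginv x))), <- (mulVg (ginv x)) at 1.
  rewrite <- mulgA, (mulgA (ginv x)), mulVg, mul1g, mulVg. reflexivity.
Qed.

Lemma mulg1 x : gmul x gone = x.
Proof. rewrite <- (mulVg x), mulgA, mulgV, mul1g. reflexivity. Qed.

Lemma mulKg x y : gmul (ginv x) (gmul x y) = y.
Proof. rewrite mulgA, mulVg, mul1g. reflexivity. Qed.

Lemma mulKVg x y : gmul x (gmul (ginv x) y) = y.
Proof. rewrite mulgA, mulgV, mul1g. reflexivity. Qed.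

Lemma mulgK x y : gmul (gmul y x) (ginv x) = y.
Proof. rewrite <- mulgA, mulgV, mulg1. reflexivity. Qed.

Lemma mulgKV x y : gmul (gmul y (ginv x)) x = y.
Proof. rewrite <- mulgA, mulVg, mulg1. reflexivity. Qed.

Lemma mulgI x y z : gmul x y = gmul x z -> y = z.
Proof. intro E. rewrite <- (mulKg x y), E, mulKg. reflexivity. Qed.

Lemma mulIg x y z : gmul y x = gmul z x -> y = z.
Proof. intro E. rewrite <- (mulgK x y), E, mulgK. reflexivity. Qed.

Lemma invg_unique x y : gmul x y = gone -> ginv x = y.
Proof. intro E. apply (mulgI x). rewrite E, mulgV. reflexivity. Qed.

Lemma invgK x : ginv (ginv x) = x.
Proof. apply invg_unique, mulVg. Qed.

Lemma invMg x y : ginv (gmul x y) = gmul (ginv y) (ginv x).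
Proof. apply invg_unique. rewrite <- mulgA, (mulgA y), mulgV, mul1g, mulgV. reflexivity. Qed.

Lemma invg1 : ginv (@gone G) = gone.
Proof. apply invg_unique, mul1g. Qed.

Lemma expgSr x k : gpow x (S k) = gmul (gpow x k) x.
Proof.
  induction k as [|k IH]; simpl.
  - rewrite mul1g, mulg1. reflexivity.
  - simpl in IH. rewrite IH at 1. rewrite mulgA. reflexivity.
Qed.

Lemma altSr a b k : alt a b (S k) = gmul (alt a b k) (if Nat.odd k then b else a).
Proof.
  revert a b; induction k as [|k IH]; intros a b.
  - simpl. rewrite mulg1, mul1g. reflexivity.
  - change (gmul a (alt b a (S k)) = gmul (gmul a (alt b a k)) (if Nat.odd (S k) then b else a)).
    rewrite IH, mulgA, Nat.odd_succ, <- Nat.negb_odd.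
    destruct (Nat.odd k); reflexivity.
Qed.

Lemma mulg_expg_rot x y k : gmul x (gpow (gmul y x) k) = gmul (gpow (gmul x y) k) x.
Proof.
  induction k as [|k IH]; simpl.
  - rewrite mul1g, mulg1. reflexivity.
  - rewrite mulgA, (mulgA x y), <- (mulgA (gmul x y) x), IH, mulgA. reflexivity.
Qed.

Lemma alt_involutions a b k : gmul a a = gone -> gmul b b = gone ->
  alt a b k = gmul (gpow (gmul a b) k) (alt b a k).
Proof.
  revert a b; induction k as [|k IH]; intros a b Ha Hb.
  - simpl. rewrite mul1g. reflexivity.
  - change (gmul a (alt b a k) = gmul (gpow (gmul a b) (S k)) (gmul b (alt a b k))).
    rewrite (IH b a Hb Ha), mulgA, mulg_expg_rot, expgSr, <- !mulgA.
    f_equal. f_equal. rewrite mulgA, Hb, mul1g. reflexivity.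
Qed.

Lemma braid_expg_eq1 a b k : gmul a a = gone -> gmul b b = gone ->
  alt a b k = alt b a k -> gpow (gmul a b) k = gone.
Proof.
  intros Ha Hb E. rewrite (alt_involutions a b k Ha Hb) in E.
  rewrite <- (mul1g (alt b a k)) in E at 2. exact (mulIg _ _ _ E).
Qed.

Lemma conjgM x a b :
  gmul (gmul x (gmul a b)) (ginv x) = gmul (gmul (gmul x a) (ginv x)) (gmul (gmul x b) (ginv x)).
Proof. rewrite <- !mulgA, mulKg. reflexivity. Qed.

End GroupFacts.

Lemma morph1 {G H : group} (f : G -> H) : is_hom f -> f gone = gone.
Proof. intro Hf. apply (mulgI (f gone)). rewrite <- Hf, !mulg1. reflexivity. Qed.

Lemma morphV {G H : group} (f : G -> H) x : is_hom f -> f (ginv x) = ginv (f x).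
Proof. intro Hf. symmetry. apply invg_unique. rewrite <- Hf, mulgV, morph1; auto. Qed.

Section Cocycles.
Context {G M : group} (act : G -> M -> M) (Hact : is_aut_action act).

Lemma act1 g : act g gone = gone.
Proof. apply (mulgI (act g gone)). rewrite <- (proj2 (proj2 Hact)), !mulg1. reflexivity. Qed.

Lemma cocycle1 (P : G -> Prop) phi : P gone -> is_cocycle act P phi -> phi gone = gone.
Proof.
  intros P1 Hphi. pose proof (Hphi gone gone P1 P1) as E.
  rewrite mul1g, (proj1 Hact) in E.
  apply (mulgI (phi gone)). rewrite <- E, mulg1. reflexivity.
Qed.

Lemma cocycle_alt phi a b k : is_cocycle act (fun _ => True) phi ->
  phi (alt a b k) = cocyc_braid act a b (phi a) (phi b) k.
Proof.
  intro Hphi. induction k as [|k IH].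
  - exact (cocycle1 _ _ I Hphi).
  - rewrite altSr. simpl. rewrite Hphi, IH by exact I. destruct (Nat.odd k); reflexivity.
Qed.

Definition sdmul (e e' : M * G) : M * G :=
  (gmul (fst e) (act (snd e) (fst e')), gmul (snd e) (snd e')).

Definition sdinv (e : M * G) : M * G :=
  (act (ginv (snd e)) (ginv (fst e)), ginv (snd e)).

Lemma sdmulA e e' e'' : sdmul e (sdmul e' e'') = sdmul (sdmul e e') e''.
Proof.
  destruct Hact as [_ [HM Hm]]. unfold sdmul; simpl.
  rewrite Hm, HM, !mulgA. reflexivity.
Qed.

Lemma sdmul1 e : sdmul (gone, gone) e = e.
Proof.
  destruct e as [m x]. unfold sdmul; simpl. rewrite (proj1 Hact), !mul1g. reflexivity.
Qed.

Lemma sdmulV e : sdmul (sdinv e) e = (gone, gone).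
Proof.
  destruct e as [m x]. unfold sdmul, sdinv; simpl.
  rewrite <- (proj2 (proj2 Hact)), mulVg, act1, mulVg. reflexivity.
Qed.

Definition sdprod : group := @Group (M * G) sdmul (gone, gone) sdinv sdmulA sdmul1 sdmulV.

Lemma sdprod_mulE (e e' : sdprod) :
  gmul e e' = (gmul (fst e) (act (snd e) (fst e')), gmul (snd e) (snd e')).
Proof. reflexivity. Qed.

Lemma alt_sdprod (e e' : sdprod) k :
  alt e e' k = (cocyc_braid act (snd e) (snd e') (fst e) (fst e') k, alt (snd e) (snd e') k).
Proof.
  induction k as [|k IH]; [reflexivity|].
  rewrite altSr, IH, sdprod_mulE, (altSr (snd e)). simpl.
  destruct (Nat.odd k); reflexivity.
Qed.

Lemma cocycle_of_graph (B : sdprod -> Prop) :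
  (forall e e', B e -> B e' -> B (gmul e e')) ->
  (forall x, exists e, B e /\ snd e = x) ->
  (forall e e', B e -> B e' -> snd e = snd e' -> e = e') ->
  exists phi, is_cocycle act (fun _ => True) phi /\ (forall e, B e -> phi (snd e) = fst e).
Proof.
  intros Bmul Bsurj Binj.
  destruct (choice _ Bsurj) as [h Hh].
  assert (hB : forall e, B e -> h (snd e) = e).
  { intros e Be. destruct (Hh (snd e)) as [Bh Eh]. apply Binj; auto. }
  exists (fun x => fst (h x)). split.
  - intros x y _ _.
    destruct (Hh x) as [Bx Ex], (Hh y) as [By Ey].
    assert (Exy : snd (gmul (h x) (h y)) = gmul x y)
      by (rewrite sdprod_mulE; simpl; rewrite Ex, Ey; reflexivity).
    rewrite <- Exy, hB, sdprod_mulE by auto. simpl. rewrite Ex. reflexivity.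
  - intros e Be. rewrite hB; auto.
Qed.

End Cocycles.

Section NormaliserQuotient.
Context {G : group} (K : G -> Prop) (HK : is_subgroup K).

Definition normalises (x : G) : Prop :=
  forall g, K g -> K (gmul (gmul x g) (ginv x)) /\ K (gmul (gmul (ginv x) g) x).

Lemma normalises1 : normalises gone.
Proof. intros g Kg. rewrite invg1, mul1g, mulg1. auto. Qed.

Lemma normalisesM x y : normalises x -> normalises y -> normalises (gmul x y).
Proof.
  intros Nx Ny g Kg. rewrite invMg. split.
  - replace (gmul (gmul (gmul x y) g) (gmul (ginv y) (ginv x)))
      with (gmul (gmul x (gmul (gmul y g) (ginv y))) (ginv x)) by (rewrite !mulgA; reflexivity).
    apply Nx, Ny, Kg.
  - replace (gmul (gmul (gmul (ginv y) (ginv x)) g) (gmul x y))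
      with (gmul (gmul (ginv y) (gmul (gmul (ginv x) g) x)) y) by (rewrite !mulgA; reflexivity).
    apply Ny, Nx, Kg.
Qed.

Lemma normalises_subgroup x : K x -> normalises x.
Proof.
  destruct HK as [_ [KM KV]]. intros Kx g Kg. auto.
Qed.

Lemma normalises_alt a b k : normalises a -> normalises b -> normalises (alt a b k).
Proof.
  revert a b; induction k as [|k IH]; intros a b Na Nb.
  - exact normalises1.
  - exact (normalisesM _ _ Na (IH b a Nb Na)).
Qed.

Definition lcoset (x : G) : G -> Prop := fun y => exists k, K k /\ y = gmul x k.

Lemma lcoset_eq x y : lcoset x = lcoset y <-> K (gmul (ginv x) y).
Proof.
  destruct HK as [K1 [KM KV]]. split.
  - intro E. assert (Hy : lcoset x y) by (rewrite E; exists gone; rewrite mulg1; auto).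
    destruct Hy as [k [Kk ->]]. rewrite mulKg. exact Kk.
  - intro Kxy. apply functional_extensionality; intro z. apply propositional_extensionality.
    split; intros [k [Kk ->]].
    + exists (gmul (ginv (gmul (ginv x) y)) k). split; auto.
      rewrite invMg, invgK, !mulgA, mulgV, mul1g. reflexivity.
    + exists (gmul (gmul (ginv x) y) k). split; auto.
      rewrite !mulgA, mulgV, mul1g. reflexivity.
Qed.

Definition setmul (P Q : G -> Prop) : G -> Prop :=
  fun z => exists p q, P p /\ Q q /\ z = gmul p q.

Definition setinv (P : G -> Prop) : G -> Prop := fun z => P (ginv z).

Lemma setmulA P Q R : setmul P (setmul Q R) = setmul (setmul P Q) R.
Proof.
  apply functional_extensionality; intro z. apply propositional_extensionality. split.
  - intros [p [w [Pp [[q [r [Qq [Rr ->]]]] ->]]]].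
    exists (gmul p q), r. rewrite mulgA. repeat split; auto. exists p, q. auto.
  - intros [w [r [[p [q [Pp [Qq ->]]]] [Rr ->]]]].
    exists p, (gmul q r). rewrite mulgA. repeat split; auto. exists q, r. auto.
Qed.

Lemma setmul_lcoset x y : normalises y -> setmul (lcoset x) (lcoset y) = lcoset (gmul x y).
Proof.
  destruct HK as [K1 [KM KV]]. intro Ny.
  apply functional_extensionality; intro z. apply propositional_extensionality. split.
  - intros [p [q [[k [Kk ->]] [[k' [Kk' ->]] ->]]]].
    exists (gmul (gmul (gmul (ginv y) k) y) k'). split.
    + apply KM; auto. apply Ny, Kk.
    + rewrite !mulgA, mulgK. reflexivity.
  - intros [k [Kk ->]]. exists x, (gmul y k). repeat split.
    + exists gone. rewrite mulg1. auto.
    + exists k. auto.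
    + symmetry. apply mulgA.
Qed.

Lemma setinv_lcoset x : normalises x -> setinv (lcoset x) = lcoset (ginv x).
Proof.
  destruct HK as [K1 [KM KV]]. intro Nx.
  apply functional_extensionality; intro z. apply propositional_extensionality. split.
  - intros [k [Kk E]]. exists (gmul (gmul x (ginv k)) (ginv x)). split.
    + apply Nx, KV, Kk.
    + rewrite <- (invgK z), E, invMg, !mulgA, mulVg, mul1g. reflexivity.
  - intros [k [Kk ->]]. exists (gmul (gmul (ginv x) (ginv k)) x). split.
    + apply Nx, KV, Kk.
    + rewrite invMg, invgK, !mulgA, mulgV, mul1g. reflexivity.
Qed.

Definition coset_of : Type := {P : G -> Prop | exists x, normalises x /\ P = lcoset x}.

Lemma coset_of_eq (P Q : coset_of) : proj1_sig P = proj1_sig Q -> P = Q.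
Proof. apply eq_sig_hprop. intros; apply proof_irrelevance. Qed.

Lemma qmul_closed (P Q : coset_of) :
  exists z, normalises z /\ setmul (proj1_sig P) (proj1_sig Q) = lcoset z.
Proof.
  destruct P as [P [x [Nx ->]]], Q as [Q [y [Ny ->]]]; simpl.
  exists (gmul x y). split.
  - exact (normalisesM _ _ Nx Ny).
  - exact (setmul_lcoset _ _ Ny).
Qed.

Lemma qinv_closed (P : coset_of) :
  exists z, normalises z /\ setinv (proj1_sig P) = lcoset z.
Proof.
  destruct P as [P [x [Nx ->]]]; simpl. exists (ginv x). split.
  - intros g Kg. rewrite invgK. exact (conj (proj2 (Nx g Kg)) (proj1 (Nx g Kg))).
  - exact (setinv_lcoset _ Nx).
Qed.

Definition qmul (P Q : coset_of) : coset_of := exist _ _ (qmul_closed P Q).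
Definition qinv (P : coset_of) : coset_of := exist _ _ (qinv_closed P).
Definition qone : coset_of := exist _ (lcoset gone) (ex_intro _ gone (conj normalises1 eq_refl)).

Lemma qmulA P Q R : qmul P (qmul Q R) = qmul (qmul P Q) R.
Proof. apply coset_of_eq, setmulA. Qed.

Lemma qmul1 P : qmul qone P = P.
Proof.
  apply coset_of_eq. destruct P as [P [x [Nx ->]]]; simpl.
  rewrite setmul_lcoset, mul1g; auto.
Qed.

Lemma qmulV P : qmul (qinv P) P = qone.
Proof.
  apply coset_of_eq. destruct P as [P [x [Nx ->]]]; simpl.
  rewrite setinv_lcoset, setmul_lcoset, mulVg; auto.
Qed.

Definition quotient : group := @Group coset_of qmul qone qinv qmulA qmul1 qmulV.

(* Outside the normaliser the projection is junk (the trivial coset). *)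
Definition coset_proj (x : G) : quotient :=
  match excluded_middle_informative (normalises x) with
  | left Nx => exist _ (lcoset x) (ex_intro _ x (conj Nx eq_refl))
  | right _ => qone
  end.

Lemma coset_proj_val x : normalises x -> proj1_sig (coset_proj x) = lcoset x.
Proof. intro Nx. unfold coset_proj. destruct excluded_middle_informative; tauto. Qed.

Lemma coset_proj1 : coset_proj gone = gone.
Proof. apply coset_of_eq, coset_proj_val, normalises1. Qed.

Lemma coset_projM x y : normalises x -> normalises y ->
  gmul (coset_proj x) (coset_proj y) = coset_proj (gmul x y).
Proof.
  intros Nx Ny. apply coset_of_eq. simpl.
  rewrite !coset_proj_val; auto using normalisesM, setmul_lcoset.
Qed.

Lemma coset_proj_eq x y : normalises x -> normalises y ->
  coset_proj x = coset_proj y <-> K (gmul (ginv x) y).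
Proof.
  intros Nx Ny. rewrite <- lcoset_eq, <- coset_proj_val, <- coset_proj_val by auto.
  split; [intros ->; reflexivity | apply coset_of_eq].
Qed.

Lemma coset_proj_eq1 x : normalises x -> coset_proj x = gone <-> K x.
Proof.
  intro Nx. rewrite <- coset_proj1, (coset_proj_eq _ _ Nx normalises1), mulg1.
  destruct HK as [_ [_ KV]]. split; intro Kx; [rewrite <- invgK|]; auto.
Qed.

Lemma coset_proj_alt a b k : normalises a -> normalises b ->
  @alt quotient (coset_proj a) (coset_proj b) k = coset_proj (alt a b k).
Proof.
  revert a b; induction k as [|k IH]; intros a b Na Nb; [symmetry; exact coset_proj1|].
  change (gmul (coset_proj a) (alt (coset_proj b) (coset_proj a) k)
          = coset_proj (gmul a (alt b a k))).
  rewrite IH by auto. apply coset_projM; auto using normalises_alt.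
Qed.

End NormaliserQuotient.

Section ProPCoxeter.
Variables (W1 W M : group) (Waff Omega S : W -> Prop) (pi : W1 -> W) (n : W -> W1)
  (act : W1 -> M -> M).
Hypothesis HW : pro_p_coxeter Waff Omega S pi n.
Hypothesis Hact : is_aut_action act.

Local Notation Omega1 := (Omega1 pi Omega).
Local Notation T := (Tker pi).

Lemma piM x y : pi (gmul x y) = gmul (pi x) (pi y).
Proof. apply HW. Qed.

Lemma pi1 : pi gone = gone.
Proof. apply morph1, HW. Qed.

Lemma piV x : pi (ginv x) = ginv (pi x).
Proof. apply morphV, HW. Qed.

Lemma pi_n s : S s -> pi (n s) = s.
Proof. apply HW. Qed.

Lemma Omega_subgroup : is_subgroup Omega.
Proof. apply HW. Qed.

Lemma Waff_subgroup : is_subgroup Waff.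
Proof. apply HW. Qed.

Lemma Omega1_1 : Omega1 gone.
Proof. unfold Defs.Omega1. rewrite pi1. apply Omega_subgroup. Qed.

Lemma Omega1M x y : Omega1 x -> Omega1 y -> Omega1 (gmul x y).
Proof. unfold Defs.Omega1. rewrite piM. apply Omega_subgroup. Qed.

Lemma Omega1V x : Omega1 x -> Omega1 (ginv x).
Proof. unfold Defs.Omega1. rewrite piV. apply Omega_subgroup. Qed.

Lemma T_Omega1 t : T t -> Omega1 t.
Proof. unfold Tker, Defs.Omega1. intros ->. apply Omega_subgroup. Qed.

Lemma T_subgroup : is_subgroup T.
Proof.
  unfold Tker. split; [|split].
  - exact pi1.
  - intros x y Hx Hy. rewrite piM, Hx, Hy, mul1g. reflexivity.
  - intros x Hx. rewrite piV, Hx, invg1. reflexivity.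
Qed.

Lemma T_n_sq s : S s -> T (gmul (n s) (n s)).
Proof.
  intro Hs. unfold Tker. rewrite piM, pi_n by exact Hs.
  destruct HW as [[[_ [_ [Hinv _]]] _] _]. apply Hinv, Hs.
Qed.

Lemma pi_gprod_n l : Forall S l -> pi (gprod (map n l)) = gprod l.
Proof. induction 1; simpl; [exact pi1|]. rewrite piM, IHForall, pi_n; auto. Qed.

Lemma W1_decomp x :
  exists l u, Forall S l /\ Omega1 u /\ x = gmul (gprod (map n l)) u.
Proof.
  destruct HW as [[[_ [_ [_ [Hgen _]]]] [_ [_ [_ [Hdec _]]]]] _].
  destruct (Hdec (pi x)) as [a [w [Ha [Hw Hx]]]].
  destruct (Hgen a Ha) as [l [Hl ->]].
  exists l, (gmul (ginv (gprod (map n l))) x). repeat split; auto.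
  - unfold Defs.Omega1. rewrite piM, piV, pi_gprod_n, Hx, mulKg; auto.
  - rewrite mulKVg. reflexivity.
Qed.

Lemma Waff_Omega_unique x x' u u' : Waff x -> Waff x' -> Omega u -> Omega u' ->
  gmul x u = gmul x' u' -> x = x'.
Proof.
  intros Hx Hx' Hu Hu' E.
  destruct Waff_subgroup as [_ [WM WV]], Omega_subgroup as [_ [OM OV]].
  destruct HW as [[_ [_ [_ [Htriv _]]]] _].
  assert (E' : gmul (ginv x') x = gmul u' (ginv u)).
  { apply (mulgI x'), (mulIg u). rewrite mulKVg, <- (mulgA x'), mulgKV. exact E. }
  assert (Hone : gmul (ginv x') x = gone) by (apply Htriv; [|rewrite E']; auto).
  rewrite <- (mulKVg x' x), Hone, mulg1. reflexivity.
Qed.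

Definition uS (u : W1) (s : W) : W := gmul (gmul (pi u) s) (ginv (pi u)).
Definition tsu (u : W1) (s : W) : W1 := gmul (ginv (gmul (n (uS u s)) u)) (gmul u (n s)).

Lemma uS_S u s : Omega1 u -> S s -> S (uS u s).
Proof. apply HW. Qed.

Lemma uS_T t s : T t -> uS t s = s.
Proof. unfold uS, Tker. intros ->. rewrite invg1, mul1g, mulg1. reflexivity. Qed.

Lemma n_uS_tsu u s : gmul (n (uS u s)) (gmul u (tsu u s)) = gmul u (n s).
Proof. unfold tsu. rewrite mulgA, mulKVg. reflexivity. Qed.

Lemma pi_tsu u s : Omega1 u -> S s -> pi (gmul u (tsu u s)) = pi u.
Proof.
  intros Hu Hs. unfold tsu.
  rewrite !piM, piV, piM, !pi_n by (auto using uS_S). unfold uS.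
  rewrite mulgKV, mulVg, mulg1. reflexivity.
Qed.

Lemma restriction_injective (phi phi' : W1 -> M) :
  is_cocycle act (fun _ => True) phi -> is_cocycle act (fun _ => True) phi' ->
  (forall s, S s -> phi (n s) = phi' (n s)) -> (forall u, Omega1 u -> phi u = phi' u) ->
  forall x, phi x = phi' x.
Proof.
  intros H H' Hs Hu x.
  destruct (W1_decomp x) as [l [u [Hl [Hu' ->]]]].
  rewrite H, H', (Hu u Hu') by exact I. f_equal. clear Hu'.
  induction Hl as [|s l Hs' Hl IH]; simpl.
  - rewrite (cocycle1 _ Hact _ _ I H), (cocycle1 _ Hact _ _ I H'). reflexivity.
  - rewrite H, H', Hs, IH; auto.
Qed.

Definition compatible (sigma : W -> M) (rho : W1 -> M) : Prop :=
  (forall s, S s -> gmul (sigma s) (act (n s) (sigma s)) = rho (gmul (n s) (n s))) /\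
  (forall u s, Omega1 u -> S s ->
     gmul (rho u) (act u (sigma s))
     = gmul (sigma (uS u s)) (act (n (uS u s)) (rho (gmul u (tsu u s))))) /\
  (forall s t k, S s -> S t -> has_order (gmul s t) k ->
     cocyc_braid act (n s) (n t) (sigma s) (sigma t) k
     = cocyc_braid act (n t) (n s) (sigma t) (sigma s) k).

Lemma restriction_compatible (phi : W1 -> M) sigma rho :
  is_cocycle act (fun _ => True) phi ->
  (forall s, S s -> phi (n s) = sigma s) -> (forall u, Omega1 u -> phi u = rho u) ->
  compatible sigma rho.
Proof.
  intros Hphi Hsigma Hrho. split; [|split].
  - intros s Hs. rewrite <- Hsigma, <- Hrho by auto using T_Omega1, T_n_sq.
    symmetry. apply Hphi; exact I.
  - intros u s Hu Hs.
    assert (Hv : Omega1 (gmul u (tsu u s))) by (unfold Defs.Omega1; rewrite pi_tsu; auto).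
    rewrite <- Hrho, <- Hsigma, <- Hsigma, <- Hrho, <- !Hphi, n_uS_tsu by auto using uS_S.
    reflexivity.
  - intros s t k Hs Ht Hk. rewrite <- !Hsigma, <- !cocycle_alt by auto.
    f_equal. apply HW; auto.
Qed.

Section Extension.
Variables (sigma : W -> M) (rho : W1 -> M).
Hypothesis rho_cocycle : is_cocycle act Omega1 rho.
Hypothesis sigma_sq :
  forall s, S s -> gmul (sigma s) (act (n s) (sigma s)) = rho (gmul (n s) (n s)).
Hypothesis sigma_rho_exchange : forall u s, Omega1 u -> S s ->
  gmul (rho u) (act u (sigma s))
  = gmul (sigma (uS u s)) (act (n (uS u s)) (rho (gmul u (tsu u s)))).
Hypothesis sigma_braid : forall s t k, S s -> S t -> has_order (gmul s t) k ->
  cocyc_braid act (n s) (n t) (sigma s) (sigma t) k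
  = cocyc_braid act (n t) (n s) (sigma t) (sigma s) k.

Local Notation E := (sdprod act Hact).

Definition lift_s (s : W) : E := (sigma s, n s).
Definition lift_u (u : W1) : E := (rho u, u).
Definition Gamma (e : E) : Prop := exists t, T t /\ e = lift_u t.

Lemma lift_uM u v : Omega1 u -> Omega1 v -> gmul (lift_u u) (lift_u v) = lift_u (gmul u v).
Proof. intros Hu Hv. rewrite sdprod_mulE. unfold lift_u; simpl. rewrite rho_cocycle; auto. Qed.

Lemma lift_u1 : lift_u gone = gone.
Proof. unfold lift_u. rewrite (cocycle1 _ Hact _ _ Omega1_1 rho_cocycle). reflexivity. Qed.

Lemma lift_uV u : Omega1 u -> ginv (lift_u u) = lift_u (ginv u).
Proof.
  intro Hu. apply invg_unique. rewrite lift_uM, mulgV, lift_u1; auto using Omega1V.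
Qed.

Lemma Gamma_subgroup : is_subgroup Gamma.
Proof.
  destruct T_subgroup as [T1 [TM TV]]. split; [|split].
  - exists gone. rewrite lift_u1. auto.
  - intros x y [t [Ht ->]] [t' [Ht' ->]]. exists (gmul t t').
    rewrite lift_uM; auto using T_Omega1.
  - intros x [t [Ht ->]]. exists (ginv t). rewrite lift_uV; auto using T_Omega1.
Qed.

Lemma lift_s_sq s : S s -> gmul (lift_s s) (lift_s s) = lift_u (gmul (n s) (n s)).
Proof. intro Hs. rewrite sdprod_mulE. unfold lift_s, lift_u; simpl. rewrite sigma_sq; auto. Qed.

Lemma lift_u_lift_s u s : Omega1 u -> S s ->
  gmul (lift_u u) (lift_s s) = gmul (lift_s (uS u s)) (lift_u (gmul u (tsu u s))).
Proof.
  intros Hu Hs. rewrite !sdprod_mulE. unfold lift_s, lift_u; simpl.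
  rewrite sigma_rho_exchange, n_uS_tsu; auto.
Qed.

Lemma lift_s_braid s t k : S s -> S t -> has_order (gmul s t) k ->
  alt (lift_s s) (lift_s t) k = alt (lift_s t) (lift_s s) k.
Proof.
  intros Hs Ht Hk. rewrite !alt_sdprod. simpl.
  rewrite sigma_braid by auto. f_equal. apply HW; auto.
Qed.

Lemma lift_s_normalises s : S s -> normalises Gamma (lift_s s).
Proof.
  intro Hs.
  assert (conj_inv : forall g, Gamma g -> Gamma (gmul (gmul (ginv (lift_s s)) g) (lift_s s))).
  { intros g [t [Ht ->]].
    rewrite <- mulgA, lift_u_lift_s, uS_T, mulKg by auto using T_Omega1.
    exists (gmul t (tsu t s)). split; [|reflexivity].
    unfold Tker. rewrite pi_tsu; auto using T_Omega1. }
  intros g Hg. split; [|auto].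
  destruct Gamma_subgroup as [_ [GM GV]].
  assert (Hsq : Gamma (gmul (lift_s s) (lift_s s))).
  { rewrite lift_s_sq by exact Hs. exists (gmul (n s) (n s)). auto using T_n_sq. }
  (* conjugating by e_s is conjugating by e_s^2 in Gamma, then by e_s^-1 *)
  replace (gmul (gmul (lift_s s) g) (ginv (lift_s s)))
    with (gmul (gmul (ginv (lift_s s))
            (gmul (gmul (gmul (lift_s s) (lift_s s)) g) (ginv (gmul (lift_s s) (lift_s s)))))
          (lift_s s))
    by (rewrite invMg, <- !mulgA, mulKg, mulVg, mulg1; reflexivity).
  auto.
Qed.

Local Notation Q := (quotient Gamma Gamma_subgroup).
Local Notation proj := (coset_proj Gamma Gamma_subgroup).

Lemma lift_s_coxeter_relation s t k : S s -> S t -> has_order (gmul s t) k ->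
  gpow (gmul (proj (lift_s s)) (proj (lift_s t))) k = gone.
Proof.
  intros Hs Ht Hk.
  assert (sq1 : forall r, S r -> gmul (proj (lift_s r)) (proj (lift_s r)) = gone).
  { intros r Hr. rewrite coset_projM, coset_proj_eq1 by
      auto using lift_s_normalises, normalisesM.
    rewrite lift_s_sq by exact Hr. exists (gmul (n r) (n r)). auto using T_n_sq. }
  apply braid_expg_eq1; auto.
  rewrite !coset_proj_alt, lift_s_braid; auto using lift_s_normalises.
Qed.

Inductive aff_lift : E -> Prop :=
| aff_lift_s s : S s -> aff_lift (lift_s s)
| aff_lift_Gamma e : Gamma e -> aff_lift e
| aff_liftM a b : aff_lift a -> aff_lift b -> aff_lift (gmul a b).

Lemma aff_lift1 : aff_lift gone.
Proof. apply aff_lift_Gamma, Gamma_subgroup. Qed.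

Lemma aff_lift_normalises a : aff_lift a -> normalises Gamma a.
Proof.
  induction 1.
  - apply lift_s_normalises; auto.
  - apply normalises_subgroup; auto using Gamma_subgroup.
  - apply normalisesM; auto.
Qed.

Lemma aff_lift_Waff a : aff_lift a -> Waff (pi (snd a)).
Proof.
  destruct Waff_subgroup as [W_1 [WM _]].
  induction 1 as [s Hs| e [t [Ht ->]] |a b _ IHa _ IHb]; simpl.
  - rewrite pi_n by exact Hs. apply HW, Hs.
  - unfold Tker in Ht. rewrite Ht. exact W_1.
  - rewrite piM. auto.
Qed.

Lemma aff_lift_conj u a : Omega1 u -> aff_lift a ->
  aff_lift (gmul (gmul (lift_u u) a) (ginv (lift_u u))).
Proof.
  intro Hu. induction 1 as [s Hs| e [t [Ht ->]] |a b _ IHa _ IHb].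
  - assert (Hv : Omega1 (gmul u (tsu u s))) by (unfold Defs.Omega1; rewrite pi_tsu; auto).
    rewrite lift_u_lift_s, <- mulgA, lift_uV, lift_uM by auto using Omega1V.
    apply aff_liftM; [apply aff_lift_s, uS_S; auto|].
    apply aff_lift_Gamma. eexists; split; [|reflexivity].
    unfold Tker. rewrite piM, piV, pi_tsu, mulgV; auto.
  - rewrite lift_uV, !lift_uM by auto using T_Omega1, Omega1M, Omega1V.
    apply aff_lift_Gamma. eexists; split; [|reflexivity].
    unfold Tker in *. rewrite !piM, Ht, mulg1, piV, mulgV. reflexivity.
  - rewrite conjgM. apply aff_liftM; auto.
Qed.

Lemma aff_lift_words l : Forall S l ->
  aff_lift (gprod (map lift_s l)) /\ snd (gprod (map lift_s l)) = gprod (map n l).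
Proof.
  induction 1 as [|s l Hs _ [IHa IHs]]; simpl.
  - split; [exact aff_lift1 | reflexivity].
  - split; [apply aff_liftM; auto using aff_lift_s|]. f_equal. exact IHs.
Qed.

Definition graph (e : E) : Prop :=
  exists a u, aff_lift a /\ Omega1 u /\ e = gmul a (lift_u u).

Lemma graphM e e' : graph e -> graph e' -> graph (gmul e e').
Proof.
  intros [a [u [Ha [Hu ->]]]] [a' [u' [Ha' [Hu' ->]]]].
  exists (gmul a (gmul (gmul (lift_u u) a') (ginv (lift_u u)))), (gmul u u').
  repeat split; auto using aff_liftM, aff_lift_conj, Omega1M.
  rewrite <- lift_uM by auto. rewrite <- !mulgA. f_equal. rewrite !mulgA, mulgKV. reflexivity.
Qed.

Lemma graph_surj x : exists e, graph e /\ snd e = x.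
Proof.
  destruct (W1_decomp x) as [l [u [Hl [Hu ->]]]].
  destruct (aff_lift_words l Hl) as [Hal Hsl].
  exists (gmul (gprod (map lift_s l)) (lift_u u)). split.
  - exists (gprod (map lift_s l)), u. auto.
  - rewrite sdprod_mulE. simpl. f_equal. exact Hsl.
Qed.

Section FromCoxeterHom.
Variable g : W -> Q.
Hypothesis gM : forall x y, Waff x -> Waff y -> g (gmul x y) = gmul (g x) (g y).
Hypothesis g_S : forall s, S s -> g s = proj (lift_s s).

Lemma aff_lift_proj a : aff_lift a -> proj a = g (pi (snd a)).
Proof.
  destruct Waff_subgroup as [W_1 _].
  assert (g1 : g gone = gone).
  { apply (mulgI (g gone)). rewrite <- gM, !mulg1; auto. }
  induction 1 as [s Hs| e He |a b Ha IHa Hb IHb].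
  - simpl. rewrite pi_n, g_S; auto.
  - destruct He as [t [Ht ->]]. simpl. unfold Tker in Ht. rewrite Ht, g1.
    assert (Gt : Gamma (lift_u t)) by (exists t; auto).
    apply coset_proj_eq1; auto using normalises_subgroup, Gamma_subgroup.
  - rewrite <- coset_projM by auto using aff_lift_normalises.
    rewrite sdprod_mulE. simpl. rewrite piM, gM, IHa, IHb; auto using aff_lift_Waff.
Qed.

Lemma aff_lift_unique a a' : aff_lift a -> aff_lift a' ->
  pi (snd a) = pi (snd a') -> Gamma (gmul (ginv a) a').
Proof.
  intros Ha Ha' Hpi.
  apply (coset_proj_eq Gamma Gamma_subgroup); auto using aff_lift_normalises.
  rewrite !aff_lift_proj, Hpi; auto.
Qed.

Lemma graph_unique e e' : graph e -> graph e' -> snd e = snd e' -> e = e'.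
Proof.
  intros [a [u [Ha [Hu ->]]]] [a' [u' [Ha' [Hu' ->]]]] Hsnd.
  rewrite !sdprod_mulE in Hsnd. simpl in Hsnd.
  assert (Ea : pi (snd a) = pi (snd a')).
  { apply (Waff_Omega_unique _ _ (pi u) (pi u')); auto using aff_lift_Waff.
    rewrite <- !piM, Hsnd. reflexivity. }
  destruct (aff_lift_unique a a' Ha Ha' Ea) as [t [Ht Et]].
  assert (Ea' : a' = gmul a (lift_u t)) by (rewrite <- Et, mulKVg; reflexivity).
  subst a'. rewrite sdprod_mulE in Hsnd. simpl in Hsnd. rewrite <- mulgA in Hsnd.
  apply mulgI in Hsnd.
  rewrite <- mulgA, lift_uM, <- Hsnd by auto using T_Omega1. reflexivity.
Qed.

End FromCoxeterHom.

Lemma restriction_surjective :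
  exists phi, is_cocycle act (fun _ => True) phi /\
    (forall s, S s -> phi (n s) = sigma s) /\ (forall u, Omega1 u -> phi u = rho u).
Proof.
  destruct HW as [[[_ [_ [_ [_ Huniv]]]] _] _].
  destruct (Huniv Q (fun w => proj (lift_s w)) lift_s_coxeter_relation) as [g [gM g_S]].
  destruct (cocycle_of_graph act Hact graph graphM graph_surj (graph_unique g gM g_S))
    as [phi [Hphi Hgraph]].
  exists phi. repeat split; auto.
  - intros s Hs. apply (Hgraph (lift_s s)).
    exists (lift_s s), gone. rewrite lift_u1, mulg1. auto using aff_lift_s, Omega1_1.
  - intros u Hu. apply (Hgraph (lift_u u)).
    exists gone, u. rewrite mul1g. auto using aff_lift1.
Qed.

End Extension.

Lemma extends_iff_compatible sigma rho : is_cocycle act Omega1 rho ->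
  (exists phi, is_cocycle act (fun _ => True) phi /\
     (forall s, S s -> phi (n s) = sigma s) /\ (forall u, Omega1 u -> phi u = rho u))
  <-> compatible sigma rho.
Proof.
  intro Hrho. split.
  - intros [phi [Hphi [Hsigma Hrho']]]. exact (restriction_compatible phi sigma rho Hphi Hsigma Hrho').
  - intros [Hi [Hii Hiii]]. exact (restriction_surjective sigma rho Hrho Hi Hii Hiii).
Qed.

End ProPCoxeter.

Theorem lemma2p2p1 (W1 W M : group) (Waff Omega S : W -> Prop)
    (pi : W1 -> W) (n : W -> W1) (act : W1 -> M -> M)
    (HW : pro_p_coxeter Waff Omega S pi n)
    (Hact : is_aut_action act) :
  (* injectivity of the restriction map *)
  (forall phi phi' : W1 -> M,
     is_cocycle act (fun _ => True) phi ->
     is_cocycle act (fun _ => True) phi' ->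
     (forall s, S s -> phi (n s) = phi' (n s)) ->
     (forall u, Omega1 pi Omega u -> phi u = phi' u) ->
     forall g, phi g = phi' g) /\
  (* description of the image *)
  (forall (sigma : W -> M) (rho : W1 -> M),
     is_cocycle act (Omega1 pi Omega) rho ->
     ((exists phi : W1 -> M,
         is_cocycle act (fun _ => True) phi /\
         (forall s, S s -> phi (n s) = sigma s) /\
         (forall u, Omega1 pi Omega u -> phi u = rho u))
      <->
      ((* (i) *)
       (forall s, S s ->
          gmul (sigma s) (act (n s) (sigma s)) = rho (gmul (n s) (n s))) /\
       (* (ii) *)
       (forall u s, Omega1 pi Omega u -> S s ->
          let us := gmul (gmul (pi u) s) (ginv (pi u)) in
          let tsu := gmul (ginv (gmul (n us) u)) (gmul u (n s)) in
          gmul (rho u) (act u (sigma s))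
          = gmul (sigma us) (act (n us) (rho (gmul u tsu)))) /\
       (* (iii) *)
       (forall s t k, S s -> S t -> has_order (gmul s t) k ->
          cocyc_braid act (n s) (n t) (sigma s) (sigma t) k
          = cocyc_braid act (n t) (n s) (sigma t) (sigma s) k)))).
Proof.
  split.
  - exact (restriction_injective W1 W M Waff Omega S pi n act HW Hact).
  - exact (extends_iff_compatible W1 W M Waff Omega S pi n act HW Hact).
Qed.
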